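(* Let $(A,\mathfrak{g},\omega)$ be an $n$-plectic structure, $f\in\mathcal{P}ois(A,\mathfrak{g},\omega)$ a homogeneous Poisson cotensor with associated Poisson constraint $y$ (i.e. $i_y\omega=f$) and associated Hamilton tensor $x$ (i.e. $i_x\omega=df$). If both $x$ and $y$ are homogeneous, then $|x|=|f|+n$ and $|y|=|x|+1$ with respect to the tensor grading. Moreover $d\,i_y\omega=i_x\omega$.
   Context: A Lie Rinehart pair $(A,\mathfrak{g})$: $A$ a commutative associative unital $\mathbb{R}$-algebra, $\mathfrak{g}$ a real Lie algebra that is an $A$-module, with a Lie algebra morphism $D:\mathfrak{g}\to\mathrm{Der}(A)$ such that $[x,ay]=D_x(a)y+a[x,y]$; torsionless means $\mathfrak{g}\to\mathfrak{g}^{\vee\vee}$ ($\mathfrak{g}^\vee=\mathrm{Hom}_A(\mathfrak{g},A)$) is injective. Tensors $X(\mathfrak{g},A)=\bigoplus_k\Lambda^k_A\mathfrak{g}$, cotensors $\Omega(\mathfrak{g},A)=\bigoplus_k\Lambda^k_A\mathfrak{g}^\vee$. Tensor grading: $|x|=k$ for $x\in\Lambda^k_A\mathfrak{g}$ and $|f|=-k$ for $f\in\Lambda^k_A\mathfrak{g}^\vee$ (tensors in positive, cotensors in negative degrees). The right contraction $i_x$ is defined by $\langle i_xf,z\rangle=\langle f,x\wedge z\rangle$ for all tensors $z$, where $\langle\cdot,\cdot\rangle$ is the natural determinant pairing between $\Lambda^k_A\mathfrak{g}^\vee$ and $\Lambda^k_A\mathfrak{g}$; $d$ is the de Rham (Chevalley–Eilenberg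 type) differential on $\Omega(\mathfrak{g},A)$, $df(x_0\wedge\cdots\wedge x_k)=\sum_j(-1)^jD_{x_j}(f(\cdots\widehat{x_j}\cdots))+\sum_{i<j}(-1)^{i+j}f([x_i,x_j]\wedge\cdots\widehat{x_i}\cdots\widehat{x_j}\cdots)$. An $n$-plectic structure is a torsionless Lie Rinehart pair with a cocycle $\omega\in\Lambda^{n+1}_A\mathfrak{g}^\vee$. A Poisson cotensor is a cotensor $f$ for which there exist tensors $x$ with $i_x\omega=df$ (Hamilton tensor) and $y$ with $i_y\omega=f$ (Poisson constraint); $\mathcal{P}ois(A,\mathfrak{g},\omega)$ is the set of Poisson cotensors. *)

From HB Require Import structures.
From mathcomp Require Import all_boot all_order all_algebra.
From mathcomp Require Import Rstruct.
From Stdlib Require Rdefinitions.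
Notation R := Rdefinitions.R.
Set Implicit Arguments. Unset Strict Implicit. Unset Printing Implicit Defensive.
Import GRing.Theory Num.Theory.
Local Open Scope ring_scope.

Section LieRinehart.
Variables (A : comAlgType R) (g : lmodType A).

(* Real scalars act on g through the structure map R -> A. *)

Definition real_lie_algebra (br : g -> g -> g) : Prop :=
  [/\ (forall u v w, br (u + v) w = br u w + br v w),
      (forall (r : R) u v, br ((r%:A : A) *: u) v = (r%:A : A) *: br u v),
      (forall u v, br u v = - br v u) &
      (forall u v w, br u (br v w) + br v (br w u) + br w (br u v) = 0)].

Definition derivation (Dx : A -> A) : Prop :=
  [/\ (forall a b, Dx (a + b) = Dx a + Dx b),
      (forall (r : R) a, Dx (r%:A * a) = r%:A * Dx a) &
      (forall a b, Dx (a * b) = Dx a * b + a * Dx b)].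

Definition lie_rinehart (br : g -> g -> g) (D : g -> A -> A) : Prop :=
  [/\ real_lie_algebra br,
      (forall x, derivation (D x)),
      (forall x y a, D (x + y) a = D x a + D y a),
      (forall (r : R) x a, D ((r%:A : A) *: x) a = r%:A * D x a) &
      (forall x y a, D (br x y) a = D x (D y a) - D y (D x a))]
  /\ (forall x y (a : A), br x (a *: y) = D x a *: y + a *: br x y).

Definition dual := {linear g -> A^o}.

Definition torsionless : Prop :=
  forall x y : g, (forall phi : dual, phi x = phi y) -> x = y.

(* A tensor is represented by a finite formal A-linear combination of
   decomposable wedges a * (u_1 /\ ... /\ u_p), encoded as (a, [:: u_1; ...; u_p]).
   (All operations below only use such representatives and are compatible with
   the relations of the exterior algebra.) *)
Definition tensor := seq (A * seq g).

Definition tensor_hom (p : nat) (x : tensor) : Prop :=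
  all (fun t => size t.2 == p) x.

(* A cotensor is seen through the determinant pairing as a function on
   sequences (z_1, ..., z_m) of elements of g, giving <F, z_1 /\ ... /\ z_m>. *)
Definition cotensor := seq g -> A.

Definition det_pair (k : nat) (phi : k.-tuple dual) (s : seq g) : A :=
  \det (\matrix_(i < k, j < k) (tnth phi i) (nth 0 s j)).

Definition cotensor_hom (k : nat) (F : cotensor) : Prop :=
  exists r : seq (A * k.-tuple dual),
    forall s, F s = if size s == k then \sum_(t <- r) t.1 * det_pair t.2 s
                    else 0.

Definition del (j : nat) (s : seq g) : seq g := take j s ++ drop j.+1 s.

(* right contraction: <i_x F, z> = <F, x /\ z> *)
Definition contr (x : tensor) (F : cotensor) : cotensor :=
  fun s => \sum_(t <- x) t.1 * F (t.2 ++ s).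

Definition dR (br : g -> g -> g) (D : g -> A -> A) (F : cotensor) : cotensor :=
  fun s =>
    \sum_(j < size s) (-1) ^+ j * D (nth 0 s j) (F (del j s))
  + \sum_(j < size s) \sum_(i < j)
      (-1) ^+ (i + j) * F (br (nth 0 s i) (nth 0 s j) :: del i (del j s)).

End LieRinehart.

Definition n_plectic (A : comAlgType R) (g : lmodType A)
    (br : g -> g -> g) (D : g -> A -> A) (n : nat) (omega : cotensor g) : Prop :=
  [/\ lie_rinehart br D, torsionless g, cotensor_hom n.+1 omega
    & dR br D omega = (fun _ => 0)].

Definition tdeg_tensor (p : nat) : int := p%:Z.
Definition tdeg_cotensor (k : nat) : int := - k%:Z.

(* Only the degrees of the data matter.  A homogeneous cotensor of degree -m
   vanishes off sequences of length m, so a nonzero value of [i_x F] at [s]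
   forces |x| + |s| = m; every summand of [d F] at [s] evaluates [F] at a
   sequence one entry shorter than [s].  Reading off the sizes at a point where
   [d f] (hence [f]) is nonzero gives the degree identities, and
   [d i_y omega = i_x omega] is just the two defining equations. *)
From HB Require Import structures.
From mathcomp Require Import all_boot all_order all_algebra.
From mathcomp Require Import Rstruct.
From mathcomp Require Import zify.
Set Implicit Arguments. Unset Strict Implicit. Unset Printing Implicit Defensive.
Import GRing.Theory Num.Theory.
Local Open Scope ring_scope.

Lemma sum_neq0_witness (V : nmodType) (I : Type) (P : pred I) (r : seq I)
    (F : I -> V) :
  all P r -> \sum_(t <- r) F t != 0 -> exists2 t, P t & F t != 0.
Proof.
elim: r => [|a r IHr]; first by rewrite big_nil eqxx.
rewrite big_cons => /andP[Pa Pr].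
have [->|Fa _] := eqVneq (F a) 0; last by exists a.
by rewrite add0r; apply: IHr.
Qed.

Lemma sum_ord_neq0_witness (V : nmodType) (m : nat) (F : 'I_m -> V) :
  \sum_(j < m) F j != 0 -> exists j, F j != 0.
Proof.
by move=> /(sum_neq0_witness (all_predT _)) [j _ Fj]; exists j.
Qed.

Lemma mulr_neq0_right (S : pzSemiRingType) (a b : S) : a * b != 0 -> b != 0.
Proof. by apply: contraNneq => ->; rewrite mulr0. Qed.

Lemma derivation0 (A : comAlgType R) (Dx : A -> A) : derivation Dx -> Dx 0 = 0.
Proof.
case=> Dx_add _ _; apply: (@addrI _ (Dx 0)).
by rewrite addr0 -Dx_add addr0.
Qed.

Section Support.
Variables (A : comAlgType R) (g : lmodType A).
Implicit Types (F : cotensor g) (s : seq g).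

Lemma size_del (j : nat) s :
  (j < size s)%N -> size (del j s) = (size s).-1.
Proof. by move=> lt_js; rewrite size_cat size_take size_drop lt_js; lia. Qed.

Lemma cotensor_hom_support (m : nat) F s :
  cotensor_hom m F -> F s != 0 -> size s = m.
Proof. by case=> r ->; case: (size s =P m) => // _; rewrite eqxx. Qed.

Lemma contr_support (m p : nat) (x : tensor g) F s :
  cotensor_hom m F -> tensor_hom p x -> contr x F s != 0 -> (p + size s = m)%N.
Proof.
move=> homF homx /(sum_neq0_witness homx) [t /eqP size_t /mulr_neq0_right].
by move/(cotensor_hom_support homF); rewrite size_cat size_t.
Qed.

Lemma dR_support (br : g -> g -> g) (D : g -> A -> A) F s :
  (forall u, derivation (D u)) -> dR br D F s != 0 ->
  exists2 s', F s' != 0 & size s = (size s').+1.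
Proof.
move=> derD; rewrite /dR.
set anchor_sum := \sum_(j < size s) (-1) ^+ j * _.
have [->|/sum_ord_neq0_witness [j]] := eqVneq anchor_sum 0.
  rewrite add0r => /sum_ord_neq0_witness [j /sum_ord_neq0_witness [i]].
  move=> /mulr_neq0_right F_ij; eexists; first exact: F_ij.
  have lt_ij := ltn_ord i; have lt_js := ltn_ord j.
  have lt_i_del : (i < size (del j s))%N by rewrite size_del //; lia.
  by rewrite /= !size_del //; lia.
move=> /mulr_neq0_right F_j _; exists (del j s).
  by apply: contraNneq F_j => ->; rewrite derivation0.
by have := ltn_ord j; rewrite size_del //; lia.
Qed.

End Support.

Theorem mainTheorem3 (A : comAlgType R) (g : lmodType A)
    (br : g -> g -> g) (D : g -> A -> A) (n : nat) (omega : cotensor g)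
    (hplectic : n_plectic br D n omega)
    (f : cotensor g) (k : nat) (hf : cotensor_hom k f)
    (x y : tensor g) (p q : nat)
    (hx : tensor_hom p x) (hy : tensor_hom q y)
    (hHam : contr x omega = dR br D f)
    (hPc : contr y omega = f) :
  ((exists s, dR br D f s != 0) ->
     tdeg_tensor p = tdeg_cotensor k + n%:Z /\
     tdeg_tensor q = tdeg_tensor p + 1)
  /\ dR br D (contr y omega) = contr x omega.
Proof.
split; last by rewrite hPc hHam.
case: hplectic => [[[_ derD _ _ _] _] _ homega _] [s dfs].
have [s' fs' size_s] := dR_support derD dfs.
have size_s' := cotensor_hom_support hf fs'.
have deg_x : (p + size s = n.+1)%N.
  by apply: (contr_support homega hx); rewrite hHam.
have deg_y : (q + size s' = n.+1)%N.
  by apply: (contr_support homega hy); rewrite hPc.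
rewrite /tdeg_tensor /tdeg_cotensor; split; lia.
Qed.
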